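(* The $(T,* )$-ideal $I(G,* )$ is generated, as a $(T,* )$-ideal, by its elements of the form $$f=\sum_{\alpha\in W_n} a_\alpha\,\alpha\big(x_{1,\sigma_1}x_{2,\sigma_2}\cdots x_{n,\sigma_n}\big),$$ where $n\ge 1$, $\sigma_1,\dots,\sigma_n\in G$ and $a_\alpha\in\mathbb{Q}$.
   Context: Let $G=\{g_1=e,g_2,\dots,g_k\}$ be a finite group of order $k$. Index the rows and columns of $k\times k$ complex matrices by $G$, let $E_{a,b}$ ($a,b\in G$) be the matrix units, and for $g\in G$ let $P_g=\sum_{h\in G}E_{h,hg}$. The $G$-crossed-product grading on $M_k(\mathbb{C})$ is $M_k(\mathbb{C})=\bigoplus_{g\in G}M_k(\mathbb{C})_g$ with $M_k(\mathbb{C})_g=\{DP_g: D \text{ diagonal}\}$. The involution $*$ on $M_k(\mathbb{C})$ is the transpose. Let $F=\mathbb{Q}\{x_{i,g},x_{i,g}^*: i\ge1, g\in G\}$ be the free associative $\mathbb{Q}$-algebra on these symbols, with the involution $*$ (the $\mathbb{Q}$-linear anti-automorphism of order 2 exchanging $x_{i,g}$ and $x_{i,g}^*$) and the $G$-grading $\deg x_{i,g}=g$, $\deg x_{i,g}^*=g^{-1}$. A graded $*$-identity is an $f\in F$ that vanishes under every substitution $x_{i,g}\mapsto A_{i,g}$, $x^*_{i,g}\mapsto A_{i,g}^{T}$ with $A_{i,g}\in M_k(\mathbb{C})_g$; $I(G,* )$ denotes the set of all graded $*$-identities. A $(T,* )$-ideal is an ideal of $F$ stable under $*$ and under every algebra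 endomorphism $\varphi$ of $F$ such that $\varphi(x_{i,g})$ is homogeneous of degree $g$ and $\varphi(x^*_{i,g})=\varphi(x_{i,g})^*$ for all $i,g$. Let $W_n=S_n\times C_2^n$ with $C_2=\{1,-1\}$. For $\alpha=(\pi,\gamma)$, $\gamma=(\gamma_1,\dots,\gamma_n)$, and a monomial $m=x_{i_1,\sigma_{i_1}}^{\epsilon_{i_1}}\cdots x_{i_n,\sigma_{i_n}}^{\epsilon_{i_n}}$ with $\{i_1,\dots,i_n\}=\{1,\dots,n\}$ and each $\epsilon_j\in\{\text{nothing},*\}$, define $\alpha(m)=x_{\pi(i_1),\sigma_{\pi(i_1)}}^{\delta_{\pi(i_1)}}\cdots x_{\pi(i_n),\sigma_{\pi(i_n)}}^{\delta_{\pi(i_n)}}$, where $\delta_j=\epsilon_j$ if $\gamma_j=1$ and $\delta_j$ is the other element of $\{\text{nothing},*\}$ if $\gamma_j=-1$. *)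

From HB Require Import structures.
From mathcomp Require Import all_boot all_order all_fingroup all_algebra all_field.
Set Implicit Arguments. Unset Strict Implicit. Unset Printing Implicit Defensive.
Import Order.TTheory GRing.Theory Num.Theory.
Local Open Scope ring_scope.

Section FreeStarAlg.
Variable gT : finGroupType.

(* A letter (i, g, b) stands for x_{i,g} if b = false and x_{i,g}^* if b = true. *)
Definition letter := (nat * gT * bool)%type.
Definition lidx (l : letter) : nat := l.1.1.
Definition lgrp (l : letter) : gT := l.1.2.
Definition lstar (l : letter) : bool := l.2.

(* monomials (words) and elements of F = Q{x_{i,g}, x_{i,g}^*}, represented
   as formal finite sums of rational multiples of words. Two representatives
   denote the same element of F iff they have the same coefficients [coef]. *)
Definition word := seq letter.
Definition fpoly := seq (rat * word).

Definition coef (p : fpoly) (w : word) : rat := \sum_(t <- p | t.2 == w) t.1.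

Definition ldeg (l : letter) : gT := if lstar l then ((lgrp l)^-1)%g else lgrp l.
Definition wdeg (w : word) : gT := (\prod_(l <- w) ldeg l)%g.
Definition homogeneous (g : gT) (p : fpoly) : Prop :=
  forall w, coef p w != 0 -> wdeg w = g.

Definition padd (p q : fpoly) : fpoly := p ++ q.
Definition pscale (c : rat) (p : fpoly) : fpoly := [seq (c * t.1, t.2) | t <- p].
Definition pmul (p q : fpoly) : fpoly :=
  [seq (t.1 * u.1, t.2 ++ u.2) | t <- p, u <- q].
Definition pone : fpoly := [:: (1, [::])].

Definition lflip (l : letter) : letter := (l.1, ~~ l.2).
Definition wstar (w : word) : word := rev (map lflip w).
Definition pstar (p : fpoly) : fpoly := [seq (t.1, wstar t.2) | t <- p].

Definition lsubst (phi : nat -> gT -> fpoly) (l : letter) : fpoly :=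
  if lstar l then pstar (phi (lidx l) (lgrp l)) else phi (lidx l) (lgrp l).
Definition wsubst (phi : nat -> gT -> fpoly) (w : word) : fpoly :=
  foldr (fun l acc => pmul (lsubst phi l) acc) pone w.
Definition psubst (phi : nat -> gT -> fpoly) (p : fpoly) : fpoly :=
  flatten [seq pscale t.1 (wsubst phi t.2) | t <- p].

Inductive TstarIdeal (S : fpoly -> Prop) : fpoly -> Prop :=
| TSI_gen f : S f -> TstarIdeal S f
| TSI_ext f h : TstarIdeal S f -> (forall w, coef f w = coef h w) -> TstarIdeal S h
| TSI_zero : TstarIdeal S [::]
| TSI_add f h : TstarIdeal S f -> TstarIdeal S h -> TstarIdeal S (padd f h)
| TSI_scale c f : TstarIdeal S f -> TstarIdeal S (pscale c f)
| TSI_mull p f : TstarIdeal S f -> TstarIdeal S (pmul p f)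
| TSI_mulr p f : TstarIdeal S f -> TstarIdeal S (pmul f p)
| TSI_star f : TstarIdeal S f -> TstarIdeal S (pstar f)
| TSI_subst (phi : nat -> gT -> fpoly) f :
    (forall i g, homogeneous g (phi i g)) ->
    TstarIdeal S f -> TstarIdeal S (psubst phi f).

(* M_k(C), k = |G|; rows and columns indexed by G through enum_val.
   C is represented by algC (the algebraic closure of Q in C). *)
Definition mat := 'M[algC]_#|gT|.
Definition gidx (i : 'I_#|gT|) : gT := enum_val i.

Definition Pmat (g : gT) : mat :=
  \matrix_(i, j) (gidx j == (gidx i * g)%g)%:R.

Definition in_component (g : gT) (A : mat) : Prop :=
  exists d : 'rV[algC]_#|gT|, A = diag_mx d *m Pmat g.

Definition leval (A : nat -> gT -> mat) (l : letter) : mat :=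
  if lstar l then (A (lidx l) (lgrp l))^T else A (lidx l) (lgrp l).
Definition weval (A : nat -> gT -> mat) (w : word) : mat :=
  \big[mulmx/1%:M]_(l <- w) leval A l.
Definition peval (A : nat -> gT -> mat) (p : fpoly) : mat :=
  \sum_(t <- p) ratr t.1 *: weval A t.2.

Definition graded_star_identity (f : fpoly) : Prop :=
  forall A : nat -> gT -> mat, (forall i g, in_component g (A i g)) ->
    peval A f = 0.

(* alpha(x_{1,s_1} ... x_{n,s_n}) for alpha = (pi, gamma) in W_n = S_n x C_2^n;
   gamma is encoded as a bool vector, true meaning gamma_j = -1. *)
Definition alpha_word (n : nat) (sigma : 'I_n -> gT) (pi : {perm 'I_n})
    (gamma : {ffun 'I_n -> bool}) : word :=
  [seq ((val (pi j)).+1, sigma (pi j), gamma (pi j)) | j <- enum 'I_n].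

Definition Wn_form (f : fpoly) : Prop :=
  exists (n : nat) (sigma : 'I_n -> gT)
         (a : {perm 'I_n} -> {ffun 'I_n -> bool} -> rat),
    (1 <= n)%N /\
    f = [seq (a pi gamma, alpha_word sigma pi gamma)
          | pi <- enum {perm 'I_n}, gamma <- enum {ffun 'I_n -> bool}].

End FreeStarAlg.

(* Soundness: evaluation at graded matrices commutes with sums, products,
   the transpose and graded substitutions, so every element of the
   (T,star)-ideal generated by identities is an identity.

   Completeness: substituting x |-> 2x multiplies the part of x-degree e by
   2^e, so the multihomogeneous components of an identity are again
   consequences of it.  If a variable x occurs d >= 2 times in a
   multihomogeneous identity f, substitute x |-> x + u with u fresh of the
   same G-degree and keep the part linear in u: this partial linearization
   has one repeated letter less, and setting u = x gives back d f.  Once f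
   is multilinear in variables y_1, ..., y_n, renaming y_j to x_(j,sigma_j)
   turns it into a combination of the words alpha(x_(1,sigma_1) ... x_(n,sigma_n)),
   alpha in W_n; identities without variables are 0. *)

From HB Require Import structures.
From mathcomp Require Import all_boot all_order all_fingroup all_algebra all_field.
From mathcomp Require Import zify.
Set Implicit Arguments. Unset Strict Implicit. Unset Printing Implicit Defensive.
Import Order.TTheory GRing.Theory Num.Theory.
Local Open Scope ring_scope.

Section TstarIdentities.
Variable gT : finGroupType.
Implicit Types (p q f : fpoly gT) (w : word gT) (l : letter gT).

Lemma coef_nil w : coef (gT:=gT) [::] w = 0.
Proof. by rewrite /coef big_nil. Qed.

Lemma coef_cons t p w :
  coef (t :: p) w = (if t.2 == w then t.1 else 0) + coef p w.
Proof. by rewrite /coef big_cons; case: ifP; rewrite ?add0r. Qed.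

Lemma coef_cat p q w : coef (p ++ q) w = coef p w + coef q w.
Proof. by rewrite /coef big_cat. Qed.

Lemma coef_pscale c p w : coef (pscale c p) w = c * coef p w.
Proof. by rewrite /coef big_map mulr_sumr. Qed.

Lemma coef_flatten (ps : seq (fpoly gT)) w :
  coef (flatten ps) w = \sum_(p <- ps) coef p w.
Proof.
by elim: ps => [|p ps IH]; rewrite ?big_nil ?coef_nil //= coef_cat big_cons IH.
Qed.

Lemma coef_flatten_pscale (F : word gT -> fpoly gT) f w :
  coef (flatten [seq pscale t.1 (F t.2) | t <- f]) w =
  \sum_(t <- f) t.1 * coef (F t.2) w.
Proof. by rewrite coef_flatten big_map; apply: eq_bigr => t _; rewrite coef_pscale. Qed.

Lemma coef_notin p w : w \notin map snd p -> coef p w = 0.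
Proof.
elim: p => [|t p IH]; rewrite ?coef_nil //= inE negb_or coef_cons => /andP[h1 h2].
by rewrite IH // eq_sym (negbTE h1) addr0.
Qed.

Lemma coef_filter (P : pred (word gT)) p w :
  coef [seq t <- p | P t.2] w = if P w then coef p w else 0.
Proof.
elim: p => [|t p IH] /=; first by rewrite coef_nil; case: ifP.
case: (t.2 =P w) => [E|NE]; case: ifP => Pt; rewrite ?coef_cons IH.
- by rewrite E eqxx -E Pt.
- by rewrite -E Pt.
- by case: (t.2 =P w) => // _; rewrite !add0r.
- by case: (t.2 =P w) => // _; rewrite !add0r.
Qed.

Lemma coef_map_mulr (F : word gT -> rat) p w :
  coef [seq (t.1 * F t.2, t.2) | t <- p] w = F w * coef p w.
Proof. by rewrite /coef big_map mulr_sumr; apply: eq_bigr => t /eqP <-; rewrite mulrC. Qed.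

Lemma coef_map_cons l p w :
  coef [seq (t.1, l :: t.2) | t <- p] w =
  if w is l' :: w' then (if l' == l then coef p w' else 0) else 0.
Proof.
rewrite /coef big_map; case: w => [|l' w']; first by rewrite big1.
case: (l' =P l) => [->|ne]; first by apply: eq_bigl => t /=; rewrite eqseq_cons eqxx.
by rewrite big1 // => t /=; rewrite eqseq_cons => /andP[/eqP E _]; case: ne.
Qed.

Lemma coef_letter c l w : coef [:: (c, [:: l])] w != 0 -> w = [:: l].
Proof. by rewrite coef_cons coef_nil addr0; case: ([:: l] =P w) => [<-|]; rewrite ?eqxx. Qed.

Definition graded_mx (g : gT) (A : mat gT) :=
  forall i j, A i j != 0 -> gidx j = (gidx i * g)%g.

Lemma in_componentP g A : in_component g A <-> graded_mx g A.
Proof.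
split=> [[d ->] i j|HA].
  rewrite mul_diag_mx !mxE; case: (gidx j =P _) => // _.
  by rewrite mulr0 eqxx.
exists (\row_i A i (enum_rank (gidx i * g)%g)).
apply/matrixP => i j; rewrite mul_diag_mx !mxE.
case: eqP => [E|NE].
  by rewrite mulr1; congr (A i _); apply: enum_val_inj; rewrite enum_rankK -E.
by rewrite mulr0; apply/eqP; apply: contraT => /HA E; case: NE.
Qed.

Lemma graded_mx0 g : graded_mx g 0.
Proof. by move=> i j; rewrite mxE eqxx. Qed.

Lemma graded_mxD g A B : graded_mx g A -> graded_mx g B -> graded_mx g (A + B).
Proof.
move=> HA HB i j; rewrite mxE; have [A0|/HA //] := eqVneq (A i j) 0.
by rewrite A0 add0r => /HB.
Qed.

Lemma graded_mxZ g c A : graded_mx g A -> graded_mx g (c *: A).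
Proof. by move=> HA i j; rewrite mxE mulf_eq0 negb_or => /andP[_ /HA]. Qed.

Lemma graded_mx_sum g I (r : seq I) (F : I -> mat gT) :
  (forall i, graded_mx g (F i)) -> graded_mx g (\sum_(i <- r) F i).
Proof.
move=> HF; elim: r => [|a r IH]; rewrite ?big_nil ?big_cons; first exact: graded_mx0.
exact: graded_mxD.
Qed.

Lemma graded_mx1 : graded_mx 1 (1%:M : mat gT).
Proof. by move=> i j; rewrite mxE mulg1; case: (i =P j) => [->|] //; rewrite eqxx. Qed.

Lemma graded_mxM g h A B :
  graded_mx g A -> graded_mx h B -> graded_mx (g * h) (A *m B).
Proof.
move=> HA HB i j; rewrite mxE => /eqP AB0.
have [k /andP[/HA Ek /HB Ej]] : exists k, (A i k != 0) && (B k j != 0).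
  apply/existsP; apply: contraT; rewrite negb_exists => /forallP Hk.
  case: AB0; apply: big1 => k _; move: (Hk k); rewrite negb_and.
  by case/orP => /negPn/eqP->; rewrite ?mul0r ?mulr0.
by rewrite Ej Ek mulgA.
Qed.

Lemma graded_mx_tr g A : graded_mx g A -> graded_mx g^-1 A^T.
Proof. by move=> HA i j; rewrite mxE => /HA ->; rewrite mulgK. Qed.

Section Evaluation.
Variable A : nat -> gT -> mat gT.

Lemma weval_nil : weval A [::] = 1%:M.
Proof. by rewrite /weval big_nil. Qed.

Lemma weval_cons l w : weval A (l :: w) = leval A l *m weval A w.
Proof. by rewrite /weval big_cons. Qed.

Lemma weval_cat v w : weval A (v ++ w) = weval A v *m weval A w.
Proof.
elim: v => [|l v IH] /=; first by rewrite weval_nil mul1mx.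
by rewrite !weval_cons IH mulmxA.
Qed.

Lemma leval_flip l : leval A (lflip l) = (leval A l)^T.
Proof. by case: l => [[i g] []]; rewrite /leval /lflip /lstar /lidx /lgrp /= ?trmxK. Qed.

Lemma weval_wstar w : weval A (wstar w) = (weval A w)^T.
Proof.
elim: w => [|l w IH]; first by rewrite /wstar /= weval_nil trmx1.
rewrite /wstar /= rev_cons -cats1 weval_cat -/(wstar w) IH !weval_cons weval_nil.
by rewrite mulmx1 trmx_mul leval_flip.
Qed.

Lemma peval_nil : peval A [::] = 0.
Proof. by rewrite /peval big_nil. Qed.

Lemma peval_cons t p : peval A (t :: p) = ratr t.1 *: weval A t.2 + peval A p.
Proof. by rewrite /peval big_cons. Qed.

Lemma peval_cat p q : peval A (p ++ q) = peval A p + peval A q.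
Proof. by rewrite /peval big_cat. Qed.

Lemma peval_pscale c p : peval A (pscale c p) = ratr c *: peval A p.
Proof.
rewrite /peval big_map scaler_sumr; apply: eq_bigr => t _.
by rewrite rmorphM scalerA.
Qed.

Lemma peval_pmul p q : peval A (pmul p q) = peval A p *m peval A q.
Proof.
rewrite /pmul /peval big_allpairs_dep mulmx_suml; apply: eq_bigr => t _.
rewrite mulmx_sumr; apply: eq_bigr => u _ /=.
by rewrite weval_cat rmorphM -scalemxAl -scalemxAr scalerA.
Qed.

Lemma peval_pstar p : peval A (pstar p) = (peval A p)^T.
Proof.
elim: p => [|t p IH]; first by rewrite /pstar peval_nil trmx0.
rewrite /pstar /= peval_cons -/(pstar p) IH weval_wstar peval_cons.
by rewrite linearD linearZ.
Qed.

Lemma peval_coef p (s : seq (word gT)) : uniq s -> {subset map snd p <= s} ->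
  peval A p = \sum_(w <- s) ratr (coef p w) *: weval A w.
Proof.
move=> s_uniq; elim: p => [|t p IH] sub_ps.
  by rewrite peval_nil big1 // => w _; rewrite coef_nil rmorph0 scale0r.
rewrite peval_cons IH => [|w pw]; last by apply: sub_ps; rewrite inE pw orbT.
have ts : t.2 \in s by apply: sub_ps; rewrite inE eqxx.
under [RHS]eq_bigr => w _ do rewrite coef_cons rmorphD scalerDl.
rewrite big_split /=; congr (_ + _).
rewrite (bigD1_seq t.2) //= eqxx big1 ?addr0 // => w.
by rewrite eq_sym => /negbTE ->; rewrite rmorph0 scale0r.
Qed.

Lemma peval_ext p q : (forall w, coef p w = coef q w) -> peval A p = peval A q.
Proof.
move=> Epq; pose s := undup (map snd (p ++ q)).
have [sp sq] : {subset map snd p <= s} /\ {subset map snd q <= s}.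
  by split=> w; rewrite mem_undup map_cat mem_cat => ->; rewrite ?orbT.
rewrite (@peval_coef p s) ?undup_uniq // (@peval_coef q s) ?undup_uniq //.
by apply: eq_bigr => w _; rewrite Epq.
Qed.

End Evaluation.

Lemma wdeg_nil : wdeg (gT:=gT) [::] = 1%g.
Proof. by rewrite /wdeg big_nil. Qed.

Lemma wdeg_cons l w : wdeg (l :: w) = (ldeg l * wdeg w)%g.
Proof. by rewrite /wdeg big_cons. Qed.

Section GradedEvaluation.
Variable A : nat -> gT -> mat gT.
Hypothesis A_graded : forall i g, graded_mx g (A i g).

Lemma weval_graded w : graded_mx (wdeg w) (weval A w).
Proof.
elim: w => [|l w IH]; first by rewrite weval_nil wdeg_nil; exact: graded_mx1.
rewrite weval_cons wdeg_cons; apply: graded_mxM => //.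
by rewrite /leval /ldeg; case: (lstar l) => //; apply: graded_mx_tr.
Qed.

Lemma peval_graded g p : homogeneous g p -> graded_mx g (peval A p).
Proof.
move=> p_homog; rewrite (@peval_coef A p (undup (map snd p))) ?undup_uniq //; last first.
  by move=> w; rewrite mem_undup.
apply: graded_mx_sum => w; have [->|/p_homog E] := eqVneq (coef p w) 0.
  by rewrite rmorph0 scale0r; exact: graded_mx0.
by apply: graded_mxZ; rewrite -E; exact: weval_graded.
Qed.

End GradedEvaluation.

Lemma peval_wsubst A phi w :
  peval A (wsubst phi w) = weval (fun i g => peval A (phi i g)) w.
Proof.
elim: w => [|l w IH] /=.
  by rewrite weval_nil /pone peval_cons peval_nil addr0 rmorph1 scale1r weval_nil.
rewrite peval_pmul IH weval_cons; congr (_ *m _).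
by rewrite /lsubst /leval; case: (lstar l); rewrite ?peval_pstar.
Qed.

Lemma peval_psubst A phi p :
  peval A (psubst phi p) = peval (fun i g => peval A (phi i g)) p.
Proof.
elim: p => [|t p IH] /=; first by rewrite /psubst /= !peval_nil.
rewrite /psubst /= peval_cat peval_pscale -/(psubst phi p) IH peval_wsubst.
by rewrite peval_cons.
Qed.

Lemma graded_star_identity_ext p q :
  graded_star_identity p -> (forall w, coef p w = coef q w) ->
  graded_star_identity q.
Proof. by move=> Ip Epq A HA; rewrite -(peval_ext A Epq) Ip. Qed.

Lemma TstarIdeal_sound (S : fpoly gT -> Prop) f :
  (forall h, S h -> graded_star_identity h) ->
  TstarIdeal S f -> graded_star_identity f.
Proof.
move=> IS; elim=> {f}.
- by move=> f /IS.
- by move=> f h _ If /(graded_star_identity_ext If).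
- by move=> A _; rewrite peval_nil.
- by move=> f h _ If _ Ih A HA; rewrite /padd peval_cat If // Ih // addr0.
- by move=> c f _ If A HA; rewrite peval_pscale If // scaler0.
- by move=> p f _ If A HA; rewrite peval_pmul If // mulmx0.
- by move=> p f _ If A HA; rewrite peval_pmul If // mul0mx.
- by move=> f _ If A HA; rewrite peval_pstar If // trmx0.
move=> phi f phi_homog _ If A HA; rewrite peval_psubst; apply: If => i g.
by apply/in_componentP/peval_graded => // i' g'; apply/in_componentP.
Qed.

Lemma graded_star_identity_psubst phi f :
  (forall i g, homogeneous g (phi i g)) ->
  graded_star_identity f -> graded_star_identity (psubst phi f).
Proof.
move=> phi_homog If; apply: (TstarIdeal_sound (S := graded_star_identity (gT:=gT))) => //.
by apply: TSI_subst => //; apply: TSI_gen.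
Qed.


Definition vdeg (y : nat * gT) w : nat := count_mem y (map fst w).

Lemma vdeg_cons y l w : vdeg y (l :: w) = ((l.1 == y) + vdeg y w)%N.
Proof. by []. Qed.

Lemma mem_vdeg y w : (y \in map fst w) = (0 < vdeg y w)%N.
Proof. by rewrite /vdeg -has_count has_pred1. Qed.

Definition rename_letter (r : nat * gT -> nat * gT) l : letter gT := (r l.1, l.2).

Definition monomial_subst (c : nat * gT -> rat) (r : nat * gT -> nat * gT)
    (i : nat) (g : gT) : fpoly gT :=
  [:: (c (i, g), [:: (r (i, g), false)])].

Lemma wsubst_monomial c r w :
  wsubst (monomial_subst c r) w = [:: (\prod_(l <- w) c l.1, map (rename_letter r) w)].
Proof.
elim: w => [|[[i g] b] w IH] /=; first by rewrite big_nil.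
by rewrite IH big_cons; case: b.
Qed.

Lemma psubst_monomial c r p :
  psubst (monomial_subst c r) p =
  [seq (t.1 * \prod_(l <- t.2) c l.1, map (rename_letter r) t.2) | t <- p].
Proof.
elim: p => [|t p IH] //=.
by rewrite /psubst /= -/(psubst _ p) IH wsubst_monomial.
Qed.

Lemma monomial_subst_homog c r :
  (forall y, (r y).2 = y.2) -> forall i g, homogeneous g (monomial_subst c r i g).
Proof.
move=> r_grp i g w /coef_letter ->.
by rewrite wdeg_cons wdeg_nil mulg1 /ldeg /lgrp /lstar /= r_grp.
Qed.

Definition scale_subst (y : nat * gT) (lam : rat) :=
  monomial_subst (fun z => if z == y then lam else 1) id.

Lemma coef_scale_subst y lam p w :
  coef (psubst (scale_subst y lam) p) w = lam ^+ vdeg y w * coef p w.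
Proof.
rewrite psubst_monomial -(coef_map_mulr (fun w => lam ^+ vdeg y w)); congr coef.
apply: eq_map => t /=; rewrite (@eq_map _ _ _ id) ?map_id => [|[]//].
congr (_ * _, _); elim: t.2 => [|l v IH]; first by rewrite big_nil.
by rewrite big_cons IH vdeg_cons; case: eqP; rewrite ?exprS ?add0n ?mul1r.
Qed.

Section Components.
Variable S : fpoly gT -> Prop.

(* p(2y) - 2^e p(y) kills the part of y-degree e and multiplies the part of
   y-degree d by 2^d - 2^e != 0. *)
Lemma TstarIdeal_vdeg_component_in y d (D : seq nat) p : TstarIdeal S p ->
  (forall w, coef p w != 0 -> vdeg y w \in d :: D) ->
  exists2 q, TstarIdeal S q &
    forall w, coef q w = if vdeg y w == d then coef p w else 0.
Proof.
elim: D p => [|e D IH] p Sp degs.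
  exists p => // w; case: eqP => // ne; apply/eqP; apply: contraT => /degs.
  by rewrite inE => /eqP.
have [ed|ne] := eqVneq e d.
  by apply: IH => // w /degs; rewrite !inE ed; case: (_ == d).
pose p' := padd (psubst (scale_subst y 2) p) (pscale (- 2 ^+ e) p).
have coef_p' w : coef p' w = (2 ^+ vdeg y w - 2 ^+ e) * coef p w.
  by rewrite coef_cat coef_scale_subst coef_pscale mulrBl mulNr.
have Sp' : TstarIdeal S p'.
  apply: TSI_add; last exact: TSI_scale.
  by apply: TSI_subst => //; apply: monomial_subst_homog.
have [q' Sq' coef_q'] : exists2 q, TstarIdeal S q &
    forall w, coef q w = if vdeg y w == d then coef p' w else 0.
  apply: IH => // w; rewrite coef_p' mulf_eq0 negb_or => /andP[nz /degs].
  rewrite !inE; case/or3P => [->//|/eqP E|->]; last by rewrite orbT.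
  by rewrite E subrr eqxx in nz.
have nz : (2 : rat) ^+ d - 2 ^+ e != 0.
  by rewrite subr_eq0 -!natrX eqr_nat eqn_exp2l // eq_sym.
exists (pscale (2 ^+ d - 2 ^+ e)^-1 q'); first exact: TSI_scale.
move=> w; rewrite coef_pscale coef_q' coef_p'.
by case: eqP => [->|]; rewrite ?mulr0 // mulrA mulVf ?mul1r.
Qed.

Lemma TstarIdeal_vdeg_component y d p : TstarIdeal S p ->
  exists2 q, TstarIdeal S q &
    forall w, coef q w = if vdeg y w == d then coef p w else 0.
Proof.
move=> Sp; apply: (TstarIdeal_vdeg_component_in (D := [seq vdeg y w | w <- map snd p])) => // w nz.
rewrite inE map_f ?orbT //; apply: contraT => /coef_notin E.
by rewrite E eqxx in nz.
Qed.

Lemma TstarIdeal_multideg_component (ys : seq (nat * gT)) (ds : seq nat) p :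
  TstarIdeal S p ->
  exists2 q, TstarIdeal S q &
    forall w, coef q w = if [seq vdeg y w | y <- ys] == ds then coef p w else 0.
Proof.
elim: ys ds p => [|y ys IH] [|d ds] p Sp.
- by exists p.
- by exists [::]; [exact: TSI_zero | move=> w; rewrite coef_nil].
- by exists [::]; [exact: TSI_zero | move=> w; rewrite coef_nil].
have [q1 Sq1 coef_q1] := TstarIdeal_vdeg_component y d Sp.
have [q Sq coef_q] := IH ds q1 Sq1.
exists q => // w; rewrite coef_q coef_q1 /= eqseq_cons.
by case: (vdeg y w == d); case: (_ == ds).
Qed.

End Components.


Definition multihomogeneous f :=
  forall y t t', t \in f -> t' \in f -> vdeg y t.2 = vdeg y t'.2.

(* Number of letters of w beyond the first occurrence of each variable;
   w is multilinear iff this is 0. *)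
Definition repetitions w := (size w - size (undup (map fst w)))%N.

Lemma repeated_var w : (0 < repetitions w)%N -> exists y, (1 < vdeg y w)%N.
Proof.
move=> rep_w; suff /hasP[y _] : has (fun y => 1 < vdeg y w)%N (map fst w) by exists y.
apply: contraT => /hasPn no_rep.
suff /undup_id w_uniq : uniq (map fst w).
  by rewrite /repetitions w_uniq size_map subnn in rep_w.
apply: count_mem_uniq => y; case: (boolP (y \in map fst w)) => [yw|/count_memPn //].
by apply/eqP; rewrite eqn_leq leqNgt no_rep //= -has_count has_pred1.
Qed.

Lemma pmul_letter l p : pmul [:: (1, [:: l])] p = [seq (t.1, l :: t.2) | t <- p].
Proof. by rewrite /pmul /= cats0; apply: eq_map => t; rewrite mul1r. Qed.

Lemma pmul_letter2 l l' p : pmul [:: (1, [:: l]); (1, [:: l'])] p =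
  [seq (t.1, l :: t.2) | t <- p] ++ [seq (t.1, l' :: t.2) | t <- p].
Proof. by rewrite /pmul /= cats0; congr (_ ++ _); apply: eq_map => t; rewrite mul1r. Qed.

Section Linearization.
Variables x u : nat * gT.
Hypothesis u_grp : u.2 = x.2.
Hypothesis u_neq_x : u != x.

Definition lin_subst (i : nat) (g : gT) : fpoly gT :=
  if (i, g) == x then [:: (1, [:: (x, false)]); (1, [:: (u, false)])]
  else [:: (1, [:: ((i, g), false)])].

Lemma lin_subst_homog i g : homogeneous g (lin_subst i g).
Proof.
rewrite /lin_subst; case: eqP => [E|_] w; last first.
  by move/coef_letter ->; rewrite wdeg_cons wdeg_nil mulg1.
rewrite !coef_cons coef_nil addr0.
case: ([:: (x, false)] =P w) => [<-|_].
  by rewrite wdeg_cons wdeg_nil mulg1 /ldeg /= -E.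
case: ([:: (u, false)] =P w) => [<-|_]; last by rewrite addr0 eqxx.
by rewrite wdeg_cons wdeg_nil mulg1 /ldeg /lgrp /= u_grp -E.
Qed.

Definition to_u l : letter gT := (u, l.2).

Lemma lsubst_lin_subst l : lsubst lin_subst l =
  if l.1 == x then [:: (1, [:: l]); (1, [:: to_u l])] else [:: (1, [:: l])].
Proof.
case: l => [[i g] b]; rewrite /lsubst /lin_subst /lstar /lidx /lgrp /=.
by case: ((i, g) =P x) => [->|_]; case: b.
Qed.

Fixpoint lin_words (w : word gT) : seq (word gT) :=
  if w is l :: w' then
    if l.1 == x then (to_u l :: w') :: map (cons l) (lin_words w')
    else map (cons l) (lin_words w')
  else [::].

Definition lin_poly (w : word gT) : fpoly gT := [seq (1, v) | v <- lin_words w].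

Lemma lin_poly_cons l w : lin_poly (l :: w) =
  (if l.1 == x then [:: (1, to_u l :: w)] else [::]) ++
  [seq (t.1, l :: t.2) | t <- lin_poly w].
Proof. by rewrite /lin_poly /=; case: ifP => _ /=; rewrite -!map_comp. Qed.

(* Expanding w0(x + u) for a u-free w0: the u-free part is w0 itself and the
   part linear in u is [lin_poly w0]; both claims need a joint induction. *)
Lemma coef_wsubst_lin_subst w0 : vdeg u w0 = 0%N -> forall w,
  (vdeg u w = 0%N -> coef (wsubst lin_subst w0) w = if w == w0 then 1 else 0) /\
  (vdeg u w = 1%N -> coef (wsubst lin_subst w0) w = coef (lin_poly w0) w).
Proof.
elim: w0 => [|l w0 IH] u_w0 w.
  rewrite /= /pone coef_cons /lin_poly /= !coef_nil addr0 eq_sym.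
  by split => // u_w; case: (w =P [::]) => // E; rewrite E in u_w.
move: u_w0; rewrite vdeg_cons; case: (l.1 =P u) => // l_neq_u; rewrite add0n.
move=> /IH {}IH; rewrite /= lsubst_lin_subst lin_poly_cons.
have l_neq_ul : (l == to_u l) = false.
  by apply/eqP => /(congr1 fst) /= E; case: l_neq_u; rewrite E.
case: (l.1 =P x) => [lx|_]; last first.
  rewrite pmul_letter coef_map_cons /= coef_map_cons.
  case: w => [|b w] //=; rewrite vdeg_cons eqseq_cons.
  case: (b =P l) => [->|_] /=; last by split.
  rewrite (introF eqP l_neq_u) add0n.
  by have [h0 h1] := IH w; split => hd; [rewrite h0 | rewrite h1].
rewrite pmul_letter2 coef_cat !coef_map_cons coef_cat coef_cons coef_nil addr0.
rewrite coef_map_cons; case: w => [|b w] /=; first by split => // _; rewrite addr0.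
rewrite vdeg_cons !eqseq_cons.
case: (b =P l) => [->|/eqP bl].
  rewrite l_neq_ul (introF eqP l_neq_u) add0n addr0 /= [to_u l == l]eq_sym l_neq_ul.
  by have [h0 h1] := IH w; rewrite /= add0r; split => hd; [rewrite h0 | rewrite h1].
rewrite add0r; case: (b =P to_u l) => [->|/eqP bu].
  rewrite /= eqxx add1n; split => // [[hd]].
  by have [h0 _] := IH w; rewrite h0 // addr0 eqxx /= eq_sym.
by rewrite [to_u l == b]eq_sym (negbTE bu) /=; split => // _; rewrite addr0.
Qed.

Lemma vdeg_lin_words w0 v : vdeg u w0 = 0%N -> v \in lin_words w0 ->
  forall y, (vdeg y v + (x == y) = vdeg y w0 + (u == y))%N.
Proof.
elim: w0 v => [|l w0 IH] v //=; rewrite vdeg_cons.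
case: (l.1 =P u) => // l_neq_u; rewrite add0n => u_w0.
case: (l.1 =P x) => [lx|_]; last first.
  by case/mapP=> v' v'_lin -> y; rewrite !vdeg_cons -!addnA IH.
rewrite inE => /orP[/eqP -> y|/mapP[v' v'_lin ->] y]; rewrite !vdeg_cons /=.
  by rewrite lx; move: (u == y) (x == y) (vdeg y w0) => a b c; lia.
by rewrite -!addnA IH.
Qed.

Lemma vdeg_u_lin_words w0 v : vdeg u w0 = 0%N -> v \in lin_words w0 ->
  vdeg u v = 1%N.
Proof.
move=> u_w0 v_lin; have := vdeg_lin_words u_w0 v_lin u.
by rewrite u_w0 eqxx eq_sym (negbTE u_neq_x) addn0.
Qed.

Lemma size_lin_words w0 : size (lin_words w0) = vdeg x w0.
Proof.
elim: w0 => [|l w0 IH] //=; rewrite vdeg_cons.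
by case: (l.1 =P x) => _ /=; rewrite size_map IH.
Qed.

Lemma size_mem_lin_words w0 v : v \in lin_words w0 -> size v = size w0.
Proof.
elim: w0 v => [|l w0 IH] v //=; case: ifP => _.
  by rewrite inE => /orP[/eqP ->|/mapP[v' /IH v'_size ->]] //=; rewrite v'_size.
by case/mapP=> v' /IH v'_size -> /=; rewrite v'_size.
Qed.

Definition merge_var (y : nat * gT) : nat * gT := if y == u then x else y.

Lemma merge_lin_words w0 v : vdeg u w0 = 0%N -> v \in lin_words w0 ->
  map (rename_letter merge_var) v = w0.
Proof.
elim: w0 v => [|l w0 IH] v //=; rewrite vdeg_cons.
case: (l.1 =P u) => // l_neq_u; rewrite add0n => u_w0.
have merge_w0 : map (rename_letter merge_var) w0 = w0.
  rewrite -[RHS]map_id; apply/eq_in_map => l' l'_w0; rewrite /rename_letter /merge_var.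
  case: (l'.1 =P u) => [E|_]; last by case: l' {l'_w0}.
  by move: u_w0; rewrite /vdeg; move/count_memPn; rewrite -E map_f.
have merge_l : rename_letter merge_var l = l.
  by rewrite /rename_letter /merge_var (introF eqP l_neq_u); case: l {l_neq_u}.
case: (l.1 =P x) => [lx|_]; last by case/mapP=> v' v'_lin -> /=; rewrite merge_l IH.
rewrite inE => /orP[/eqP ->|/mapP[v' v'_lin ->]] /=; last by rewrite merge_l IH.
by rewrite merge_w0 /rename_letter /merge_var /= eqxx -lx; case: l {l_neq_u lx merge_l}.
Qed.

Lemma repetitions_lin_words w0 v : vdeg u w0 = 0%N -> (1 < vdeg x w0)%N ->
  v \in lin_words w0 -> repetitions v = (repetitions w0).-1.
Proof.
move=> u_w0 x_w0 v_lin; have degs := vdeg_lin_words u_w0 v_lin.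
suff vars_v : perm_eq (undup (map fst v)) (u :: undup (map fst w0)).
  by rewrite /repetitions (perm_size vars_v) (size_mem_lin_words v_lin) subnS.
apply: uniq_perm; rewrite /= ?undup_uniq ?mem_undup ?mem_vdeg ?u_w0 //.
move=> y; rewrite inE !mem_undup !mem_vdeg.
have [->|y_neq_u] := eqVneq y u; first by rewrite (vdeg_u_lin_words u_w0 v_lin).
move: (degs y); rewrite [u == y]eq_sym (negbTE y_neq_u) addn0 /=.
have [<-|_] := eqVneq x y; last by rewrite addn0 => ->.
by rewrite addn1 => E; rewrite -E in x_w0 *.
Qed.

Definition partial_lin (f : fpoly gT) : fpoly gT :=
  flatten [seq pscale t.1 (lin_poly t.2) | t <- f].

Lemma mem_partial_lin f t' :
  t' \in partial_lin f -> exists2 t, t \in f & t'.2 \in lin_words t.2.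
Proof. by case/flattenP => p /mapP[t ft ->] /mapP[_ /mapP[v v_lin ->] ->]; exists t. Qed.

Section UFree.
Variable f : fpoly gT.
Hypothesis u_free : forall t, t \in f -> vdeg u t.2 = 0%N.

Lemma coef_partial_lin w :
  coef (partial_lin f) w = if vdeg u w == 1%N then coef (psubst lin_subst f) w else 0.
Proof.
rewrite /partial_lin /psubst !coef_flatten_pscale.
case: (vdeg u w =P 1%N) => [u_w|u_w].
  rewrite big_seq_cond [RHS]big_seq_cond; apply: eq_bigr => t /andP[ft _].
  by have [_ ->] := coef_wsubst_lin_subst (u_free ft) w.
rewrite big_seq_cond big1 // => t /andP[ft _]; rewrite coef_notin ?mulr0 //.
rewrite /lin_poly -map_comp map_id; apply/negP => w_lin; apply: u_w.
exact: vdeg_u_lin_words (u_free ft) w_lin.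
Qed.

Lemma coef_merge_partial_lin d w : (forall t, t \in f -> vdeg x t.2 = d) ->
  coef (psubst (monomial_subst (fun _ => 1) merge_var) (partial_lin f)) w =
  d%:R * coef f w.
Proof.
move=> x_deg; rewrite psubst_monomial /coef big_map /partial_lin big_flatten big_map.
rewrite mulr_sumr [RHS]big_mkcond big_seq_cond [RHS]big_seq_cond.
apply: eq_bigr => t /andP[ft _].
rewrite /pscale /lin_poly -map_comp big_map /= big_seq_cond.
rewrite (eq_bigl (fun v => (v \in lin_words t.2) && (t.2 == w))); last first.
  move=> v /=; case v_lin: (v \in lin_words t.2) => //=.
  by rewrite (merge_lin_words (u_free ft) v_lin).
rewrite (eq_bigr (fun _ => t.1)) => [|v _]; last by rewrite big1_eq !mulr1.
rewrite -big_seq_cond big_const_seq iter_addr_0; case: eqP => _ /=.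
  by rewrite count_predT size_lin_words x_deg // mulr_natl.
by rewrite count_pred0.
Qed.

Lemma partial_lin_identity :
  graded_star_identity f -> graded_star_identity (partial_lin f).
Proof.
move=> If; have If' := TSI_gen (S := graded_star_identity (gT:=gT)) If.
have Ilin := TSI_subst lin_subst_homog If'.
have [q Iq coef_q] := TstarIdeal_vdeg_component u 1 Ilin.
apply: (graded_star_identity_ext (TstarIdeal_sound (fun h Ih => Ih) Iq)) => w.
by rewrite coef_q coef_partial_lin.
Qed.

Lemma partial_lin_multihomogeneous :
  multihomogeneous f -> multihomogeneous (partial_lin f).
Proof.
move=> f_homog y t1 t2 /mem_partial_lin[s1 fs1 lin1] /mem_partial_lin[s2 fs2 lin2].
apply/eqP; rewrite -(eqn_add2r (x == y)) (vdeg_lin_words (u_free fs1) lin1).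
by rewrite (vdeg_lin_words (u_free fs2) lin2) (f_homog y s1 s2).
Qed.

Lemma TstarIdeal_of_partial_lin S d : (0 < d)%N ->
  (forall t, t \in f -> vdeg x t.2 = d) ->
  TstarIdeal S (partial_lin f) -> TstarIdeal S f.
Proof.
move=> d_gt0 x_deg Slin.
have merge_homog : forall i g, homogeneous g (monomial_subst (fun=> 1) merge_var i g).
  by apply: monomial_subst_homog => y; rewrite /merge_var; case: eqP => // ->.
apply: (TSI_ext (TSI_scale d%:R^-1 (TSI_subst merge_homog Slin))) => w.
by rewrite coef_pscale (coef_merge_partial_lin w x_deg) mulrA mulVf ?mul1r // pnatr_eq0 -lt0n.
Qed.

End UFree.

End Linearization.

Lemma repetitions0_uniq w : repetitions w = 0%N -> uniq (map fst w).
Proof.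
move/eqP; rewrite subn_eq0 => le_w; apply: contraT; rewrite -ltn_size_undup size_map.
by rewrite ltnNge le_w.
Qed.

Lemma perm_repetitions w w' :
  perm_eq (map fst w) (map fst w') -> repetitions w = repetitions w'.
Proof.
move=> ww'; rewrite /repetitions -(size_map fst w) -(size_map fst w') (perm_size ww').
by rewrite (perm_size (perm_undup (perm_mem ww'))).
Qed.

Lemma multihomogeneous_perm f t t' : multihomogeneous f ->
  t \in f -> t' \in f -> perm_eq (map fst t.2) (map fst t'.2).
Proof. by move=> f_homog ft ft'; apply/allP => y _; apply/eqP/f_homog. Qed.

Definition fresh_index f : nat := (\max_(t <- f) \max_(l <- t.2) lidx l).+1.

Lemma vdeg_fresh f g t : t \in f -> vdeg (fresh_index f, g) t.2 = 0%N.
Proof.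
move=> ft; apply/count_memPn/mapP => -[l lt E].
have := leq_bigmax_seq (F := fun t => \max_(l <- t.2) lidx l) _ ft isT.
move/(leq_trans (leq_bigmax_seq (F := @lidx gT) _ lt isT)).
by rewrite /lidx -E ltnn.
Qed.

Lemma peval_zero p : peval (fun _ _ => 0) p = ratr (coef p [::]) *: 1%:M.
Proof.
elim: p => [|[c [|l w]] p IH]; rewrite ?peval_nil ?coef_nil ?rmorph0 ?scale0r //.
  by rewrite peval_cons weval_nil IH coef_cons eqxx rmorphD scalerDl.
rewrite peval_cons weval_cons IH coef_cons /= add0r.
by rewrite [leval _ _](_ : _ = 0) ?mul0mx ?scaler0 ?add0r // /leval; case: ifP; rewrite ?trmx0.
Qed.

Lemma identity_coef_nil f : graded_star_identity f -> coef f [::] = 0.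
Proof.
move=> If; have := If (fun _ _ => 0) (fun i g => proj2 (in_componentP g 0) (graded_mx0 g)).
rewrite peval_zero => /matrixP /(_ (enum_rank 1%g) (enum_rank 1%g)) /eqP.
by rewrite !mxE eqxx mulr1 fmorph_eq0 => /eqP.
Qed.

Lemma TstarIdeal_constant S f : graded_star_identity f ->
  (forall t, t \in f -> t.2 = [::]) -> TstarIdeal S f.
Proof.
move=> If f_const; apply: (TSI_ext (TSI_zero S)) => w; rewrite coef_nil.
have [->|w_nil] := eqVneq w [::]; first by rewrite identity_coef_nil.
by rewrite coef_notin //; apply/mapP => -[t /f_const -> w_eq]; rewrite w_eq in w_nil.
Qed.

Definition Wn_identity f := graded_star_identity f /\ Wn_form f.

Section Multilinear.
Variable vs : seq (nat * gT).
Hypothesis vs_uniq : uniq vs.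
Local Notation n := (size vs).

Definition var0 : nat * gT := (0%N, 1%g).
Definition std_grp (j : 'I_n) : gT := (nth var0 vs j).2.

Definition to_std (y : nat * gT) : nat * gT :=
  if y \in vs then ((index y vs).+1, y.2) else y.
Definition of_std (y : nat * gT) : nat * gT :=
  if (0 < y.1 <= n)%N && (y.2 == (nth var0 vs y.1.-1).2) then nth var0 vs y.1.-1 else y.

Lemma to_std_grp y : (to_std y).2 = y.2.
Proof. by rewrite /to_std; case: ifP. Qed.

Lemma of_std_grp y : (of_std y).2 = y.2.
Proof. by rewrite /of_std; case: ifP => // /andP[_ /eqP]. Qed.

Lemma to_stdK y : y \in vs -> of_std (to_std y) = y.
Proof. by move=> vs_y; rewrite /to_std vs_y /of_std /= index_mem vs_y nth_index //= eqxx. Qed.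

Lemma alpha_word_inj (pi pi' : {perm 'I_n}) (ga ga' : {ffun 'I_n -> bool}) :
  alpha_word std_grp pi ga = alpha_word std_grp pi' ga' -> pi = pi' /\ ga = ga'.
Proof.
move=> /(proj2 (eq_in_map _ _ _)) E.
have pi_eq : pi = pi'.
  by apply/permP => j; have [/val_inj] := E j (mem_enum _ _).
subst pi'; split => //; apply/ffunP => i.
by move: (E (pi^-1 i)%g (mem_enum _ _)); rewrite permKV; case.
Qed.

Lemma to_std_alpha_word (s : word gT) : perm_eq (map fst s) vs ->
  exists (pi : {perm 'I_n}) (ga : {ffun 'I_n -> bool}),
    map (rename_letter to_std) s = alpha_word std_grp pi ga.
Proof.
move=> s_vs; have s_uniq : uniq (map fst s) by rewrite (perm_uniq s_vs).
have s_size : size s = n by rewrite -(perm_size s_vs) size_map.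
have s_vars (k : 'I_n) : nth var0 (map fst s) k \in vs.
  by rewrite -(perm_mem s_vs) mem_nth // size_map s_size.
have pos_lt (k : 'I_n) : (index (nth var0 (map fst s) k) vs < n)%N by rewrite index_mem.
pose pos k := Ordinal (pos_lt k).
have pos_inj : injective pos.
  move=> k1 k2 /(congr1 val) /= /(congr1 (nth var0 vs)); rewrite !nth_index //.
  by move/eqP; rewrite nth_uniq ?size_map ?s_size // => /eqP /val_inj.
pose l0 : letter gT := (var0, false).
exists (perm pos_inj), [ffun i : 'I_n => (nth l0 s (index (nth var0 vs i) (map fst s))).2].
have s_enum : [seq nth l0 s (val j) | j <- enum 'I_n] = s.
  by rewrite (map_comp (nth l0 s) val) val_enum_ord -s_size -/(mkseq _ _) mkseq_nth.
rewrite -{1}s_enum -map_comp /alpha_word; apply: eq_map => j /=.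
have j_lt : (j < size s)%N by rewrite s_size.
rewrite permE /= /rename_letter /to_std -(nth_map l0 var0) // s_vars /std_grp /=.
by rewrite nth_index // ffunE nth_index // index_uniq ?size_map.
Qed.

Definition Wn_poly (q : fpoly gT) : fpoly gT :=
  [seq (coef q (alpha_word std_grp pi ga), alpha_word std_grp pi ga)
     | pi <- enum {perm 'I_n}, ga <- enum {ffun 'I_n -> bool}].

Lemma coef_Wn_poly q :
  (forall w, w \in map snd q -> exists pi ga, w = alpha_word std_grp pi ga) ->
  forall w, coef (Wn_poly q) w = coef q w.
Proof.
move=> q_alpha w; rewrite [LHS]/coef big_mkcond big_allpairs_dep /=.
have [/existsP[pi0 /existsP[ga0 /eqP <-]]|] :=
  boolP [exists pi, exists ga, alpha_word std_grp pi ga == w].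
  rewrite (bigD1_seq pi0) ?mem_enum ?enum_uniq //= (bigD1_seq ga0) ?mem_enum ?enum_uniq //=.
  rewrite eqxx !big1 ?addr0 // => [pi1 pi1_neq|ga1 ga1_neq]; last first.
    by case: eqP => // /alpha_word_inj[_ E]; rewrite E eqxx in ga1_neq.
  by apply: big1 => ga1 _; case: eqP => // /alpha_word_inj[E _]; rewrite E eqxx in pi1_neq.
move/existsPn => not_alpha; rewrite big1 => [|pi1 _]; last first.
  by apply: big1 => ga1 _; move/existsPn: (not_alpha pi1) => /(_ ga1) /negbTE ->.
rewrite coef_notin //; apply/negP => /q_alpha[pi [ga E]].
by move/existsPn: (not_alpha pi) => /(_ ga); rewrite E eqxx.
Qed.

Lemma TstarIdeal_multilinear f : (0 < n)%N ->
  (forall t, t \in f -> perm_eq (map fst t.2) vs) ->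
  graded_star_identity f -> TstarIdeal Wn_identity f.
Proof.
move=> n_gt0 vars_f If.
pose fstd := psubst (monomial_subst (fun=> 1) to_std) f.
have Ifstd : graded_star_identity fstd.
  by apply: graded_star_identity_psubst If; apply: monomial_subst_homog; exact: to_std_grp.
have fstd_alpha w : w \in map snd fstd -> exists pi ga, w = alpha_word std_grp pi ga.
  by rewrite /fstd psubst_monomial -map_comp => /mapP[t /vars_f /to_std_alpha_word ? ->].
have Wfstd : TstarIdeal Wn_identity fstd.
  apply: (TSI_ext (f := Wn_poly fstd)) => [|w]; last exact: coef_Wn_poly.
  apply: TSI_gen; split.
    by apply: (graded_star_identity_ext Ifstd) => w; rewrite coef_Wn_poly.
  by exists n, std_grp, (fun pi ga => coef fstd (alpha_word std_grp pi ga)).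
have of_std_homog := @monomial_subst_homog (fun=> 1) _ of_std_grp.
apply: (TSI_ext (TSI_subst of_std_homog Wfstd)) => w; congr coef.
rewrite /fstd !psubst_monomial -map_comp -[RHS]map_id.
apply/eq_in_map => t /vars_f t_vs /=; rewrite !big1_eq !mulr1 -map_comp.
have -> : [seq (rename_letter of_std \o rename_letter to_std) l | l <- t.2] = t.2.
  rewrite -[RHS]map_id; apply/eq_in_map => l lt /=.
  by rewrite /rename_letter /= to_stdK -?(perm_mem t_vs) ?map_f //; case: l {lt}.
by case: t {t_vs}.
Qed.

End Multilinear.

Lemma TstarIdeal_repetitions0 f : graded_star_identity f -> multihomogeneous f ->
  (forall t, t \in f -> repetitions t.2 = 0%N) -> TstarIdeal Wn_identity f.
Proof.
case: f => [|t0 f0]; first by move=> *; apply: TSI_zero.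
set f := t0 :: f0 => If f_homog f_lin; have ft0 : t0 \in f := mem_head t0 f0.
have vars_f t : t \in f -> perm_eq (map fst t.2) (map fst t0.2).
  by move=> ft; apply: multihomogeneous_perm f_homog ft ft0.
have [vars0|vars_gt0] := posnP (size (map fst t0.2)).
  apply: TstarIdeal_constant => // t /vars_f/perm_size.
  by rewrite vars0 size_map => /size0nil.
apply: (TstarIdeal_multilinear (vs := map fst t0.2)) => //.
exact: repetitions0_uniq (f_lin t0 ft0).
Qed.

Lemma TstarIdeal_multihomogeneous_repetitions r f : graded_star_identity f ->
  multihomogeneous f -> (forall t, t \in f -> repetitions t.2 = r) ->
  TstarIdeal Wn_identity f.
Proof.
elim: r f => [|r IH] f If f_homog f_rep; first exact: TstarIdeal_repetitions0.
case: f => [|t0 f0] in If f_homog f_rep *; first exact: TSI_zero.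
set f := t0 :: f0 in If f_homog f_rep *; have ft0 : t0 \in f := mem_head t0 f0.
have [x x_rep] : exists x, (1 < vdeg x t0.2)%N by apply: repeated_var; rewrite f_rep.
pose u := (fresh_index f, x.2).
have u_free t : t \in f -> vdeg u t.2 = 0%N by apply: vdeg_fresh.
have u_neq_x : u != x by apply: contraTneq x_rep => <-; rewrite u_free.
have x_deg t : t \in f -> vdeg x t.2 = vdeg x t0.2 by move=> ft; apply: f_homog.
apply: (TstarIdeal_of_partial_lin (x := x) (u := u) erefl u_free (ltnW x_rep) x_deg).
apply: IH.
- exact: partial_lin_identity.
- exact: partial_lin_multihomogeneous.
- move=> t' /mem_partial_lin[t ft t'_lin].
  by rewrite (repetitions_lin_words u_neq_x (u_free t ft) _ t'_lin) ?f_rep ?x_deg.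
Qed.

Lemma TstarIdeal_multihomogeneous f : graded_star_identity f ->
  multihomogeneous f -> TstarIdeal Wn_identity f.
Proof.
case: f => [|t0 f0] If f_homog; first exact: TSI_zero.
apply: (TstarIdeal_multihomogeneous_repetitions (r := repetitions t0.2)) => // t ft.
by apply/perm_repetitions/(multihomogeneous_perm f_homog ft); rewrite mem_head.
Qed.

Definition vars f := flatten [seq map fst t.2 | t <- f].
Definition multideg (ys : seq (nat * gT)) w := [seq vdeg y w | y <- ys].
Definition multideg_component f (ds : seq nat) :=
  [seq t <- f | multideg (vars f) t.2 == ds].

Lemma multideg_component_identity f ds : graded_star_identity f ->
  graded_star_identity (multideg_component f ds).
Proof.
move=> If; have Sf := TSI_gen (S := graded_star_identity (gT:=gT)) If.
have [q Iq coef_q] := TstarIdeal_multideg_component (vars f) ds Sf.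
apply: (graded_star_identity_ext (TstarIdeal_sound (fun h Ih => Ih) Iq)) => w.
by rewrite coef_q /multideg_component (coef_filter (fun w => multideg (vars f) w == ds)).
Qed.

Lemma multideg_component_multihomogeneous f ds :
  multihomogeneous (multideg_component f ds).
Proof.
move=> y t t'; rewrite !mem_filter => /andP[/eqP dt ft] /andP[/eqP dt' ft'].
have [y_f|y_nf] := boolP (y \in vars f).
  have y_idx : (index y (vars f) < size (vars f))%N by rewrite index_mem.
  have := congr1 (nth 0%N ^~ (index y (vars f))) (etrans dt (esym dt')).
  by rewrite !(nth_map y) // nth_index.
suff vdeg0 s : s \in f -> vdeg y s.2 = 0%N by rewrite !vdeg0.
move=> fs; apply/count_memPn/negP => ys; case/negP: y_nf.
by apply/flattenP; exists (map fst s.2) => //; apply: map_f.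
Qed.

Lemma coef_multideg_components f w :
  coef f w = \sum_(ds <- undup [seq multideg (vars f) t.2 | t <- f])
               coef (multideg_component f ds) w.
Proof.
under eq_bigr => ds _ do rewrite (coef_filter (fun w => multideg (vars f) w == ds)).
have [->|fw] := eqVneq (coef f w) 0; first by rewrite big1 // => ds _; case: ifP.
have : w \in map snd f by apply: contraT => /coef_notin fw0; rewrite fw0 eqxx in fw.
case/mapP => t ft ->; rewrite (bigD1_seq (multideg (vars f) t.2)) ?undup_uniq //=.
  by rewrite eqxx big1 ?addr0 // => ds; rewrite eq_sym => /negbTE ->.
by rewrite mem_undup; apply: map_f.
Qed.

Lemma TstarIdeal_flatten S (ps : seq (fpoly gT)) :
  (forall p, p \in ps -> TstarIdeal S p) -> TstarIdeal S (flatten ps).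
Proof.
elim: ps => [|p ps IH] Sps /=; first exact: TSI_zero.
apply: TSI_add; first by apply: Sps; rewrite mem_head.
by apply: IH => q qps; apply: Sps; rewrite inE qps orbT.
Qed.

Lemma TstarIdeal_identity f : graded_star_identity f -> TstarIdeal Wn_identity f.
Proof.
move=> If; pose D := undup [seq multideg (vars f) t.2 | t <- f].
apply: (TSI_ext (f := flatten [seq multideg_component f ds | ds <- D])).
  apply: TstarIdeal_flatten => _ /mapP[ds _ ->].
  apply: TstarIdeal_multihomogeneous; last exact: multideg_component_multihomogeneous.
  exact: multideg_component_identity.
by move=> w; rewrite coef_flatten big_map -coef_multideg_components.
Qed.

End TstarIdentities.

Theorem mainTheorem1 (gT : finGroupType) :
  forall f : fpoly gT,
    graded_star_identity f <->
    TstarIdeal (fun h => graded_star_identity h /\ Wn_form h) f.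
Proof.
move=> f; split; first exact: TstarIdeal_identity.
by apply: TstarIdeal_sound => h [].
Qed.
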